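(* Let $H$ be a monoid. Then: (i) if $\mathcal{P}_{\mathrm{fin},1}(H)$ is HmF, then every element of $H$ has order $\le 3$; (ii) if $\mathcal{P}_{\mathrm{fin},1}(H)$ is UmF, then every element of $H$ has order $\le 2$. In either case, $H$ is periodic (every element has finite order) and hence Dedekind-finite.
   Context: The order of an element $x$ of a monoid is the cardinality of the submonoid it generates. A monoid $M$ is Dedekind-finite if $xy=1_M$ implies $yx=1_M$. $\mathcal{P}_{\mathrm{fin},1}(H)$ denotes the set of non-empty finite subsets of $H$ containing $1_H$, a monoid under $XY=\{xy:x\in X,y\in Y\}$. In a monoid $M$: $x\mid_M y$ iff $y\in MxM$; $x,y$ are associated if each divides the other; proper divisor means divides but not associated. A unit-divisor divides $1_M$; otherwise it is a non-unit-divisor. An irreducible is a non-unit-divisor $a$ with $a\neq xy$ for all non-unit-divisors $x,y$ properly dividing $a$. A factorization of $x$ is a finite word over the irreducibles with product $x$; its length is its number of letters. For words $\mathfrak a,\mathfrak b$, $\mathfrak a\sqsubseteq\mathfrak b$ means $\mathfrak a$ is, up to associatedness of letters, a subword (subsequence) of some permutation of $\mathfrak b$; equivalence means $\sqsubseteq$ both ways. A factorization $\mathfrak a$ of $x$ is minimal if no factorization $\mathfrak b$ of $x$ satisfies $\mathfrak b\sqsubseteq\mathfrak a\not\sqsubseteq\mathfrak b$. $M$ is HmF if every non-unit-divisor has a factorization and all minimal factorizations of any element have the same length; UmF if every non-unit-divisor has a factorization and any two minimal factorizations of an element are equivalent. *)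

From Stdlib Require Import List Permutation Arith.
Import ListNotations.
Set Implicit Arguments.

Record monoid := Monoid {
  carrier :> Type;
  mop : carrier -> carrier -> carrier;
  mone : carrier;
  mopA : forall x y z, mop x (mop y z) = mop (mop x y) z;
  mop1m : forall x, mop mone x = x;
  mopm1 : forall x, mop x mone = x }.

Arguments mop {m}.
Arguments mone {m}.

Section Generic.
Variables (M : Type) (mul : M -> M -> M) (one : M).

Definition mdivides (x y : M) : Prop := exists a b, y = mul (mul a x) b.
Definition massociated (x y : M) : Prop := mdivides x y /\ mdivides y x.
Definition mproper_divisor (x y : M) : Prop := mdivides x y /\ ~ massociated x y.
Definition unit_divisor (x : M) : Prop := mdivides x one.

Definition irreducible (a : M) : Prop :=
  ~ unit_divisor a /\
  forall x y, ~ unit_divisor x -> ~ unit_divisor y ->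
    mproper_divisor x a -> mproper_divisor y a -> a <> mul x y.

Definition word_prod (w : list M) : M := fold_right mul one w.

Definition factorization (x : M) (w : list M) : Prop :=
  Forall irreducible w /\ word_prod w = x.

Inductive subword_rel (R : M -> M -> Prop) : list M -> list M -> Prop :=
| sw_nil : subword_rel R [] []
| sw_skip : forall a b y, subword_rel R a b -> subword_rel R a (y :: b)
| sw_take : forall a b x y, R x y -> subword_rel R a b -> subword_rel R (x :: a) (y :: b).

Definition word_le (a b : list M) : Prop :=
  exists b', Permutation b b' /\ subword_rel massociated a b'.

Definition word_equiv (a b : list M) : Prop := word_le a b /\ word_le b a.

Definition minimal_factorization (x : M) (a : list M) : Prop :=
  factorization x a /\
  ~ (exists b, factorization x b /\ word_le b a /\ ~ word_le a b).

Definition HmF : Prop :=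
  (forall x, ~ unit_divisor x -> exists w, factorization x w) /\
  (forall x a b, minimal_factorization x a -> minimal_factorization x b ->
     length a = length b).

Definition UmF : Prop :=
  (forall x, ~ unit_divisor x -> exists w, factorization x w) /\
  (forall x a b, minimal_factorization x a -> minimal_factorization x b ->
     word_equiv a b).

End Generic.

Definition is_finite {T : Type} (X : T -> Prop) : Prop :=
  exists l : list T, forall x, X x -> In x l.

Definition card_le {T : Type} (X : T -> Prop) (n : nat) : Prop :=
  exists l : list T, length l <= n /\ forall x, X x -> In x l.

Section MonoidDefs.
Variable H : monoid.

Fixpoint mpow (x : H) (n : nat) : H :=
  match n with O => mone | S k => mop x (mpow x k) end.

Definition gen_submonoid (x : H) : H -> Prop := fun y => exists n, y = mpow x n.

Definition order_le (x : H) (n : nat) : Prop := card_le (gen_submonoid x) n.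

Definition has_finite_order (x : H) : Prop := is_finite (gen_submonoid x).
Definition periodic : Prop := forall x : H, has_finite_order x.

Definition dedekind_finite : Prop :=
  forall x y : H, mop x y = mone -> mop y x = mone.

Definition setmul (X Y : H -> Prop) : H -> Prop :=
  fun z => exists x y, X x /\ Y y /\ z = mop x y.

Definition Pfin1 : Type := { X : H -> Prop | is_finite X /\ X mone }.

Lemma setmul_ok (X Y : H -> Prop) :
  is_finite X /\ X mone -> is_finite Y /\ Y mone ->
  is_finite (setmul X Y) /\ setmul X Y mone.
Proof.
  intros [[lx Hx] X1] [[ly Hy] Y1]; split.
  - exists (flat_map (fun x => map (mop x) ly) lx).
    intros z (x & y & Xx & Yy & ->).
    apply in_flat_map; exists x; split; [auto|].
    apply in_map; auto.
  - exists mone, mone; repeat split; auto. now rewrite mop1m.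
Qed.

Definition Pmul (A B : Pfin1) : Pfin1 :=
  exist _ (setmul (proj1_sig A) (proj1_sig B))
    (setmul_ok (proj2_sig A) (proj2_sig B)).

Lemma Pone_ok : is_finite (fun z : H => z = mone) /\ (@mone H) = mone.
Proof. split; [exists [mone]; intros z ->; left; auto | auto]. Qed.

Definition Pone : Pfin1 := exist _ (fun z : H => z = mone) Pone_ok.

End MonoidDefs.

Arguments Pmul {H}.
Arguments Pone {H}.
Arguments order_le {H}.
Arguments mpow {H}.
Arguments gen_submonoid {H}.
Arguments has_finite_order {H}.

From Pilot Require Import Defs.
From Stdlib Require Import List Permutation Arith Lia Classical
  FunctionalExtensionality PropExtensionality ProofIrrelevance.
Import ListNotations.

(* Every set in P_{fin,1}(H) contains 1, so divisibility in P_{fin,1}(H) implies inclusion;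
   hence associated sets are equal, the only unit divisor is {1}, and every {1, a} with a <> 1
   is irreducible.  If 1, x, x^2, x^3 are distinct, then {1,x}{1,x}{1,x} = {1,x}{1,x^2} =
   {1,x,x^2,x^3} has minimal factorizations of lengths 3 and 2, since no shorter product of
   the letters involved reaches x^3.  If 1, x, x^2 are distinct but x^3 is one of them, then
   {1,x}{1,x} = {1,x}{1,x^2} = {1,x,x^2} has two minimal factorizations which are not
   equivalent.  Finally, an element x with x^i = x^j for some i < j satisfies x^(j-i) = 1 as
   soon as it has a right inverse, which gives Dedekind-finiteness. *)

Section Subwords.
Context {M : Type}.

Lemma subword_rel_length {R : M -> M -> Prop} {b a : list M} :
  subword_rel R b a -> length b <= length a.
Proof. induction 1; simpl; lia. Qed.

Lemma subword_rel_in {R : M -> M -> Prop} {b a : list M} :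
  subword_rel R b a -> forall c, In c b -> exists c', In c' a /\ R c c'.
Proof.
  induction 1 as [| b a y _ IH | b a c' y Rc'y _ IH]; simpl; intros c hc; try tauto.
  - destruct (IH c hc) as (d & ? & ?); eauto.
  - destruct hc as [<- | hc]; eauto.
    destruct (IH c hc) as (d & ? & ?); eauto.
Qed.

Lemma subword_rel_eq_length {R : M -> M -> Prop} {b a : list M} :
  subword_rel R b a -> length b = length a -> Forall2 R b a.
Proof.
  induction 1 as [| b a y sw _ | b a c y Rcy _ IH]; simpl; intros e; auto.
  apply subword_rel_length in sw; lia.
Qed.

Lemma subword_rel_refl (R : M -> M -> Prop) (a : list M) :
  (forall c, R c c) -> subword_rel R a a.
Proof. intros Rrefl; induction a; [constructor | apply sw_take; auto]. Qed.

End Subwords.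

Section Words.
Context {M : Type} {mul : M -> M -> M} {one : M}.

Lemma word_le_length {b a : list M} : word_le mul b a -> length b <= length a.
Proof.
  intros (a' & perm & sw).
  apply subword_rel_length in sw; apply Permutation_length in perm; lia.
Qed.

Lemma UmF_HmF : UmF mul one -> HmF mul one.
Proof.
  intros [hfact hequiv]; split; auto.
  intros X a b ha hb; destruct (hequiv X a b ha hb) as [ab ba].
  apply word_le_length in ab, ba; lia.
Qed.

End Words.

Section Orders.
Context {H : monoid}.

Lemma mpow_add (x : H) (m n : nat) : mpow x (m + n) = mop (mpow x m) (mpow x n).
Proof. induction m as [| m IH]; simpl; [now rewrite mop1m | now rewrite IH, mopA]. Qed.

Lemma mpow_S_r (x : H) (n : nat) : mpow x (S n) = mop (mpow x n) x.
Proof. rewrite <- Nat.add_1_r, mpow_add; simpl; now rewrite mopm1. Qed.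

Lemma mpow_collision_reduce (x : H) (i j : nat) : i < j -> mpow x i = mpow x j ->
  forall m, exists k, k < j /\ mpow x m = mpow x k.
Proof.
  intros ij e m; induction m as [m IH] using (well_founded_induction lt_wf).
  destruct (Nat.lt_ge_cases m j) as [mj | jm]; [eauto|].
  replace m with ((m - j) + j) by lia.
  rewrite mpow_add, <- e, <- mpow_add; apply IH; lia.
Qed.

Lemma order_le_of_collision (x : H) (n i j : nat) :
  i < j <= n -> mpow x i = mpow x j -> order_le x n.
Proof.
  intros [ij jn] e; exists (map (mpow x) (seq 0 j)); split.
  - rewrite length_map, length_seq; lia.
  - intros z [m ->]; destruct (mpow_collision_reduce x i j ij e m) as (k & kj & ->).
    apply in_map, in_seq; lia.
Qed.

Lemma collision_of_order_le (x : H) (n : nat) :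
  order_le x n -> exists i j, i < j <= n /\ mpow x i = mpow x j.
Proof.
  intros (l & ln & hl); apply NNPP; intros no_collision.
  assert (nodup : NoDup (map (mpow x) (seq 0 (S n)))).
  { apply NoDup_map_NoDup_ForallPairs; [|apply seq_NoDup].
    intros i j hi hj e; apply in_seq in hi, hj.
    destruct (Nat.lt_trichotomy i j) as [ij | [-> | ji]]; auto;
      exfalso; apply no_collision; [exists i, j | exists j, i]; split; auto; lia. }
  apply NoDup_incl_length with (l' := l) in nodup.
  - rewrite length_map, length_seq in nodup; lia.
  - intros z hz; apply in_map_iff in hz as (m & <- & _); apply hl; now exists m.
Qed.

Definition mpow_inj_upto (x : H) (n : nat) : Prop :=
  forall i j, i <= n -> j <= n -> mpow x i = mpow x j -> i = j.

Lemma mpow_inj_upto_of_not_order_le (x : H) (n : nat) :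
  ~ order_le x n -> mpow_inj_upto x n.
Proof.
  intros not_le i j hi hj e.
  destruct (Nat.lt_trichotomy i j) as [ij | [ij | ji]]; auto; exfalso; apply not_le.
  - apply (order_le_of_collision x n i j); auto.
  - apply (order_le_of_collision x n j i); auto.
Qed.

Lemma mpow_inj_upto_neq {x : H} {n : nat} :
  mpow_inj_upto x n -> forall i j, i <= n -> j <= n -> i <> j -> mpow x i <> mpow x j.
Proof. intros inj i j hi hj ij e; exact (ij (inj i j hi hj e)). Qed.

Lemma mpow_inj_upto_neq_one {x : H} {n : nat} :
  mpow_inj_upto x n -> forall i, 0 < i <= n -> mpow x i <> mone.
Proof. intros inj i hi; exact (mpow_inj_upto_neq inj i 0 ltac:(lia) ltac:(lia) ltac:(lia)). Qed.

Lemma mpow_right_inverse (x y : H) (n : nat) :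
  mop x y = mone -> mop (mpow x n) (mpow y n) = mone.
Proof.
  intros xy; induction n as [| n IH]; [apply mop1m|].
  rewrite (mpow_S_r x n); cbn [mpow].
  rewrite <- mopA, (mopA _ x y), xy, mop1m; exact IH.
Qed.

(* From x^i = x^j multiply on the right by y^i, using x^i y^i = 1. *)
Lemma mpow_sub_eq_one (x y : H) (i j : nat) :
  mop x y = mone -> i < j -> mpow x i = mpow x j -> mpow x (j - i) = mone.
Proof.
  intros xy ij e.
  pose proof (mpow_right_inverse _ _ i xy) as xyi.
  rewrite <- (mopm1 _ (mpow x (j - i))), <- xyi at 1.
  rewrite mopA, <- mpow_add.
  replace (j - i + i) with j by lia.
  now rewrite <- e.
Qed.

Lemma mul_eq_one_sym_of_mpow (x y : H) (n : nat) :
  mpow x (S n) = mone -> mop x y = mone -> mop y x = mone.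
Proof.
  intros xn xy; rewrite mpow_S_r in xn.
  assert (y = mpow x n) as ->; [|exact xn].
  now rewrite <- (mop1m _ y), <- xn, <- mopA, xy, mopm1.
Qed.

Lemma periodic_dedekind_finite : periodic H -> dedekind_finite H.
Proof.
  intros per x y xy; destruct (per x) as [l hl].
  destruct (collision_of_order_le x (length l)) as (i & j & [ij _] & e); [now exists l|].
  pose proof (mpow_sub_eq_one x y i j xy ij e) as xd.
  destruct (j - i) as [| d] eqn:ed; [lia|].
  exact (mul_eq_one_sym_of_mpow x y d xd xy).
Qed.

End Orders.

Fixpoint subset_sums (ks : list nat) : list nat :=
  match ks with
  | [] => [0]
  | k :: ks => subset_sums ks ++ map (Nat.add k) (subset_sums ks)
  end.

Lemma subset_sums_le (ks : list nat) (m : nat) : In m (subset_sums ks) -> m <= list_sum ks.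
Proof.
  revert m; induction ks as [| k ks IH]; simpl; intros m; [intros [<- | []]; lia|].
  intros hm; apply in_app_or in hm as [hm | hm]; [specialize (IH _ hm); lia|].
  apply in_map_iff in hm as (m' & <- & hm'); specialize (IH _ hm'); lia.
Qed.

Lemma list_sum_repeat (k m : nat) : list_sum (repeat k m) = m * k.
Proof. induction m as [| m IH]; simpl; lia. Qed.

Section Pfin1.
Variable H : monoid.

Local Notation "z ∈ A" := (proj1_sig A z) (at level 70).
Local Notation word_prod := (word_prod (@Pmul H) Pone).
Local Notation word_le := (word_le (@Pmul H)).
Local Notation irreducible := (irreducible (@Pmul H) Pone).
Local Notation minimal_factorization := (minimal_factorization (@Pmul H) Pone).

Lemma Pfin1_ext (A B : Pfin1 H) : (forall z, z ∈ A <-> z ∈ B) -> A = B.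
Proof.
  destruct A as [A hA], B as [B hB]; simpl; intros eAB.
  assert (A = B) as <-.
  { extensionality z; apply propositional_extensionality; auto. }
  f_equal; apply proof_irrelevance.
Qed.

Lemma Pfin1_one (A : Pfin1 H) : mone ∈ A.
Proof. exact (proj2 (proj2_sig A)). Qed.

Lemma Pfin1_neq {A B : Pfin1 H} {z : H} : z ∈ A -> ~ z ∈ B -> A <> B.
Proof. intros zA zB ->; contradiction. Qed.

Lemma Pmul_1l (A : Pfin1 H) : Pmul Pone A = A.
Proof.
  apply Pfin1_ext; intros z; simpl; unfold setmul; split.
  - intros (u & v & -> & Av & ->); now rewrite mop1m.
  - intros Az; exists mone, z; rewrite mop1m; auto.
Qed.

Lemma Pmul_1r (A : Pfin1 H) : Pmul A Pone = A.
Proof.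
  apply Pfin1_ext; intros z; simpl; unfold setmul; split.
  - intros (u & v & Au & -> & ->); now rewrite mopm1.
  - intros Az; exists z, mone; rewrite mopm1; auto.
Qed.

Lemma mdivides_incl {A B : Pfin1 H} :
  mdivides (@Pmul H) A B -> forall z, z ∈ A -> z ∈ B.
Proof.
  intros (C & D & ->) z Az; simpl; unfold setmul.
  exists (mop mone z), mone; repeat split.
  - exists mone, z; auto using Pfin1_one.
  - apply Pfin1_one.
  - now rewrite mopm1, mop1m.
Qed.

Lemma massociated_eq {A B : Pfin1 H} : massociated (@Pmul H) A B -> A = B.
Proof.
  intros [AB BA]; apply Pfin1_ext; intros z.
  split; [apply (mdivides_incl AB) | apply (mdivides_incl BA)].
Qed.

Lemma massociated_refl (A : Pfin1 H) : massociated (@Pmul H) A A.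
Proof.
  assert (AA : mdivides (@Pmul H) A A).
  { exists Pone, Pone; now rewrite Pmul_1l, Pmul_1r. }
  split; exact AA.
Qed.

Lemma unit_divisor_iff (A : Pfin1 H) :
  unit_divisor (@Pmul H) Pone A <-> forall z, z ∈ A -> z = mone.
Proof.
  split.
  - intros hA z Az; exact (mdivides_incl hA z Az).
  - intros hA; replace A with (@Pone H).
    + apply massociated_refl.
    + apply Pfin1_ext; intros z; split; simpl; auto.
      intros ->; apply Pfin1_one.
Qed.

Lemma Ppair_subproof (a : H) :
  is_finite (fun z : H => z = mone \/ z = a) /\ ((mone : H) = mone \/ (mone : H) = a).
Proof. split; [exists [mone; a]; intros z [-> | ->]; simpl; auto | now left]. Qed.

Definition Ppair (a : H) : Pfin1 H := exist _ _ (Ppair_subproof a).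

Lemma irreducible_Ppair (a : H) : a <> mone -> irreducible (Ppair a).
Proof.
  intros a1; split.
  - rewrite unit_divisor_iff; intros hA; apply a1, hA; simpl; auto.
  - intros X Y X_nonunit _ [Xa not_assoc] _ _; apply not_assoc.
    replace X with (Ppair a); [apply massociated_refl|].
    apply Pfin1_ext; intros z; split; [|apply (mdivides_incl Xa)].
    assert (a_in_X : a ∈ X).
    { apply NNPP; intros aX; apply X_nonunit, unit_divisor_iff; intros w Xw.
      destruct (mdivides_incl Xa w Xw) as [-> | ->]; tauto. }
    intros [-> | ->]; auto using Pfin1_one.
Qed.

Lemma word_le_incl {b a : list (Pfin1 H)} : word_le b a -> incl b a.
Proof.
  intros (a' & perm & sw) c bc.
  destruct (subword_rel_in sw c bc) as (c' & a'c' & assoc).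
  rewrite (massociated_eq assoc); now apply (Permutation_in _ (Permutation_sym perm)).
Qed.

Lemma Forall2_massociated_eq {b a : list (Pfin1 H)} :
  Forall2 (massociated (@Pmul H)) b a -> b = a.
Proof. induction 1; f_equal; auto using massociated_eq. Qed.

Lemma word_le_eq_length {b a : list (Pfin1 H)} :
  word_le b a -> length b = length a -> word_le a b.
Proof.
  intros (a' & perm & sw) e.
  assert (b = a') as <-.
  { apply Forall2_massociated_eq, (subword_rel_eq_length sw).
    rewrite e; apply Permutation_length, perm. }
  exists a; split; [now apply Permutation_sym | apply subword_rel_refl, massociated_refl].
Qed.

Lemma minimal_factorization_intro (X : Pfin1 H) (a : list (Pfin1 H)) :
  factorization (@Pmul H) Pone X a ->
  (forall b, incl b a -> length b < length a -> word_prod b <> X) ->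
  minimal_factorization X a.
Proof.
  intros fa shorter; split; auto.
  intros (b & [_ eb] & ba & not_ab).
  destruct (Nat.eq_dec (length b) (length a)) as [e | ne].
  - exact (not_ab (word_le_eq_length ba e)).
  - apply word_le_length in ba as le.
    exact (shorter b (word_le_incl ba) ltac:(lia) eb).
Qed.

Lemma minimal_factorization_repeat (A : Pfin1 H) (n : nat) :
  irreducible A ->
  (forall m, m < n -> word_prod (repeat A m) <> word_prod (repeat A n)) ->
  minimal_factorization (word_prod (repeat A n)) (repeat A n).
Proof.
  intros irrA powers_differ; apply minimal_factorization_intro.
  - split; [apply Forall_forall; intros c hc; now rewrite (repeat_spec _ _ _ hc) | reflexivity].
  - intros b ba lb.
    rewrite (Forall_eq_repeat (x := A) (l := b)).
    + rewrite repeat_length in lb; apply powers_differ, lb.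
    + apply Forall_forall; intros c hc; symmetry; exact (repeat_spec _ _ _ (ba c hc)).
Qed.

Lemma minimal_factorization_pair (A B : Pfin1 H) :
  irreducible A -> irreducible B ->
  word_prod [A; B] <> Pone -> word_prod [A; B] <> A -> word_prod [A; B] <> B ->
  minimal_factorization (word_prod [A; B]) [A; B].
Proof.
  intros irrA irrB X1 XA XB; apply minimal_factorization_intro.
  - split; [auto | reflexivity].
  - intros [| c [| d b]] ba lb; simpl in lb; try lia.
    + intros e; now apply X1.
    + cbn [Defs.word_prod fold_right]; rewrite Pmul_1r; intros e.
      destruct (ba c (or_introl eq_refl)) as [<- | [<- | []]]; auto.
Qed.

Section Powers.
Variable x : H.

Definition Ppair_pow (k : nat) : Pfin1 H := Ppair (mpow x k).

Lemma in_word_prod_Ppair_pow (ks : list nat) (z : H) :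
  z ∈ word_prod (map Ppair_pow ks) <-> exists m, In m (subset_sums ks) /\ z = mpow x m.
Proof.
  revert z; induction ks as [| k ks IH]; intros z; simpl.
  - split; [intros ->; exists 0; auto | intros (m & [<- | []] & ->); reflexivity].
  - unfold setmul; split.
    + intros (a & b & [-> | ->] & hb & ->); apply IH in hb as (m & hm & ->).
      * exists m; rewrite mop1m; auto using in_or_app.
      * exists (k + m); rewrite mpow_add; split; auto.
        apply in_or_app; right; now apply in_map.
    + intros (m & hm & ->); apply in_app_or in hm as [hm | hm].
      * exists mone, (mpow x m); rewrite mop1m; repeat split; auto.
        apply IH; eauto.
      * apply in_map_iff in hm as (m' & <- & hm').
        exists (mpow x k), (mpow x m'); rewrite mpow_add; repeat split; auto.
        apply IH; eauto.
Qed.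

Lemma word_prod_Ppair_pow_eq (ks ks' : list nat) :
  (forall m, In m (subset_sums ks) -> exists m', In m' (subset_sums ks') /\ mpow x m = mpow x m') ->
  (forall m', In m' (subset_sums ks') -> exists m, In m (subset_sums ks) /\ mpow x m' = mpow x m) ->
  word_prod (map Ppair_pow ks) = word_prod (map Ppair_pow ks').
Proof.
  intros to from; apply Pfin1_ext; intros z; rewrite !in_word_prod_Ppair_pow; split.
  - intros (m & hm & ->); destruct (to m hm) as (m' & ? & ?); eauto.
  - intros (m' & hm' & ->); destruct (from m' hm') as (m & ? & ?); eauto.
Qed.

Lemma mpow_notin_word_prod (n : nat) (ks : list nat) :
  (forall m, m <= list_sum ks -> mpow x m <> mpow x n) ->
  ~ mpow x n ∈ word_prod (map Ppair_pow ks).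
Proof.
  intros ne; rewrite in_word_prod_Ppair_pow; intros (m & hm & e).
  exact (ne m (subset_sums_le _ _ hm) (eq_sym e)).
Qed.

Lemma notin_Ppair_pow (n k : nat) :
  mpow x n <> mone -> mpow x n <> mpow x k -> ~ mpow x n ∈ Ppair_pow k.
Proof. intros n1 nk [e | e]; auto. Qed.

Lemma HmF_not_mpow_inj_upto_3 : HmF (@Pmul H) Pone -> ~ mpow_inj_upto x 3.
Proof.
  intros [_ same_length] inj.
  pose proof (mpow_inj_upto_neq inj) as ne.
  pose proof (mpow_inj_upto_neq_one inj) as ne1.
  assert (irr : forall k, 0 < k <= 2 -> irreducible (Ppair_pow k))
    by (intros k hk; apply irreducible_Ppair, ne1; lia).
  pose (X := word_prod (map Ppair_pow [1; 1; 1])).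
  assert (x3_in_X : mpow x 3 ∈ X)
    by (apply in_word_prod_Ppair_pow; exists 3; simpl; tauto).
  assert (X_pair : word_prod [Ppair_pow 1; Ppair_pow 2] = X).
  { apply (word_prod_Ppair_pow_eq [1; 2] [1; 1; 1]); intros m hm; exists m; simpl in *; tauto. }
  enough (3 = 2) by lia.
  apply (same_length X (repeat (Ppair_pow 1) 3) [Ppair_pow 1; Ppair_pow 2]).
  - apply minimal_factorization_repeat; [apply irr; lia|].
    intros m hm e; apply (mpow_notin_word_prod 3 (repeat 1 m)).
    + rewrite list_sum_repeat; intros j hj; apply ne; lia.
    + rewrite map_repeat; fold (Ppair_pow 1); rewrite e; exact x3_in_X.
  - rewrite <- X_pair; apply minimal_factorization_pair; try (apply irr; lia);
      rewrite X_pair; apply (Pfin1_neq x3_in_X).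
    + exact (ne1 3 ltac:(lia)).
    + apply notin_Ppair_pow; [apply ne1 | apply ne]; lia.
    + apply notin_Ppair_pow; [apply ne1 | apply ne]; lia.
Qed.

Lemma UmF_not_mpow_inj_upto_2 (i : nat) :
  UmF (@Pmul H) Pone -> i <= 2 -> mpow x 3 = mpow x i -> ~ mpow_inj_upto x 2.
Proof.
  intros [_ equivalent] hi x3 inj.
  pose proof (mpow_inj_upto_neq inj) as ne.
  pose proof (mpow_inj_upto_neq_one inj) as ne1.
  assert (irr : forall k, 0 < k <= 2 -> irreducible (Ppair_pow k))
    by (intros k hk; apply irreducible_Ppair, ne1; lia).
  pose (X := word_prod (map Ppair_pow [1; 1])).
  assert (x_in_X : mpow x 1 ∈ X)
    by (apply in_word_prod_Ppair_pow; exists 1; simpl; tauto).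
  assert (x2_in_X : mpow x 2 ∈ X)
    by (apply in_word_prod_Ppair_pow; exists 2; simpl; tauto).
  assert (X_pair : word_prod [Ppair_pow 1; Ppair_pow 2] = X).
  { apply (word_prod_Ppair_pow_eq [1; 2] [1; 1]); intros m hm; simpl in hm.
    - destruct (Nat.eq_dec m 3) as [-> | m3]; [exists i | exists m]; simpl; intuition lia.
    - exists m; simpl; tauto. }
  assert (min_repeat : minimal_factorization X (repeat (Ppair_pow 1) 2)).
  { apply minimal_factorization_repeat; [apply irr; lia|].
    intros m hm e; apply (mpow_notin_word_prod 2 (repeat 1 m)).
    + rewrite list_sum_repeat; intros j hj; apply ne; lia.
    + rewrite map_repeat; fold (Ppair_pow 1); rewrite e; exact x2_in_X. }
  assert (min_pair : minimal_factorization X [Ppair_pow 1; Ppair_pow 2]).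
  { rewrite <- X_pair; apply minimal_factorization_pair; try (apply irr; lia);
      rewrite X_pair.
    - apply (Pfin1_neq x_in_X); exact (ne1 1 ltac:(lia)).
    - apply (Pfin1_neq x2_in_X), notin_Ppair_pow; [apply ne1 | apply ne]; lia.
    - apply (Pfin1_neq x_in_X), notin_Ppair_pow; [apply ne1 | apply ne]; lia. }
  destruct (equivalent X _ _ min_pair min_repeat) as [pair_le _].
  assert (same_letter : Ppair_pow 2 = Ppair_pow 1)
    by (destruct (word_le_incl pair_le (Ppair_pow 2)) as [<- | [<- | []]]; simpl; auto).
  apply (notin_Ppair_pow 1 2); [apply ne1 | apply ne | rewrite same_letter; simpl]; auto; lia.
Qed.

Lemma HmF_order_le_3 : HmF (@Pmul H) Pone -> order_le x 3.
Proof.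
  intros hmf; apply NNPP; intros not_le.
  exact (HmF_not_mpow_inj_upto_3 hmf (mpow_inj_upto_of_not_order_le x _ not_le)).
Qed.

Lemma UmF_order_le_2 : UmF (@Pmul H) Pone -> order_le x 2.
Proof.
  intros umf; apply NNPP; intros not_le.
  pose proof (mpow_inj_upto_of_not_order_le x _ not_le) as inj.
  destruct (collision_of_order_le x 3 (HmF_order_le_3 (UmF_HmF umf))) as (i & j & [ij j3] & e).
  destruct (Nat.eq_dec j 3) as [-> | j3'].
  - refine (UmF_not_mpow_inj_upto_2 i umf _ (eq_sym e) inj); lia.
  - apply not_le, (order_le_of_collision x 2 i j); [lia | exact e].
Qed.

End Powers.

End Pfin1.

Theorem lemma3p4 (H : monoid) :
  (HmF (@Pmul H) Pone -> forall x : H, order_le x 3) /\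
  (UmF (@Pmul H) Pone -> forall x : H, order_le x 2) /\
  (HmF (@Pmul H) Pone \/ UmF (@Pmul H) Pone -> periodic H /\ dedekind_finite H).
Proof.
  split; [|split].
  - intros hmf x; exact (HmF_order_le_3 H x hmf).
  - intros umf x; exact (UmF_order_le_2 H x umf).
  - intros hyp.
    assert (hmf : HmF (@Pmul H) Pone) by (destruct hyp; auto using UmF_HmF).
    assert (per : periodic H).
    { intros x; destruct (HmF_order_le_3 H x hmf) as (l & _ & hl); now exists l. }
    split; [exact per | exact (periodic_dedekind_finite per)].
Qed.
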